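(* For all integers $n\le d\le r\le R_{\mathrm{typ\text{-}max}}(n,d,n)$, there exist matrices $\mathbf A,\mathbf C\in\mathbb{R}^{n\times r}$, $\mathbf B\in\mathbb{R}^{d\times r}$ and a vector $\mathbf h_0\in\mathbb{R}^n$ such that the CP rank of $[\![\mathbf A,\mathbf B,\mathbf C]\!]$ equals $r$ and $\operatorname{rank}(\mathbf B\,\mathrm{diag}(\mathbf A^\top\mathbf h_0)\mathbf C^\top)=\operatorname{rank}(\tanh(\mathbf B\,\mathrm{diag}(\mathbf A^\top\mathbf h_0)\mathbf C^\top))=n$, where $\tanh$ is applied componentwise.
   Context: For $\mathbf A\in\mathbb{R}^{n\times r},\mathbf B\in\mathbb{R}^{d\times r},\mathbf C\in\mathbb{R}^{n\times r}$ with columns $\mathbf a_s,\mathbf b_s,\mathbf c_s$, $[\![\mathbf A,\mathbf B,\mathbf C]\!]=\sum_{s=1}^r\mathbf a_s\circ\mathbf b_s\circ\mathbf c_s\in\mathbb{R}^{n\times d\times n}$. The CP rank of a tensor is the least number of rank-one (outer product) terms summing to it. A typical rank of $\mathbb{R}^{n\times d\times n}$ is a value $R$ such that the set of tensors of CP rank $R$ has positive Lebesgue measure; $R_{\mathrm{typ\text{-}max}}(n,d,n)$ is the largest typical rank. *)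

From mathcomp Require Import all_boot all_order all_algebra.
From mathcomp Require Import reals sequences exp.
Set Implicit Arguments. Unset Strict Implicit. Unset Printing Implicit Defensive.
Import Order.TTheory GRing.Theory Num.Theory.
Local Open Scope ring_scope.

Section Defs.
Variable R : realType.

Definition tidx (n d : nat) : finType := ('I_n * 'I_d * 'I_n)%type.
Definition tensor (n d : nat) := {ffun tidx n d -> R}.

Definition cp_tensor (n d r : nat) (A : 'M[R]_(n, r)) (B : 'M[R]_(d, r))
  (C : 'M[R]_(n, r)) : tensor n d :=
  [ffun ijk : tidx n d =>
     \sum_(s < r) A ijk.1.1 s * B ijk.1.2 s * C ijk.2 s].

Definition cp_decomposable (n d : nat) (T : tensor n d) (r : nat) : Prop :=
  exists (A : 'M[R]_(n, r)) (B : 'M[R]_(d, r)) (C : 'M[R]_(n, r)),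
    T = cp_tensor A B C.

Definition has_cp_rank (n d : nat) (T : tensor n d) (r : nat) : Prop :=
  cp_decomposable T r /\ forall s, (s < r)%N -> ~ cp_decomposable T s.

Definition box_vol (I : finType) (a b : I -> R) : R := \prod_(i : I) (b i - a i).

Definition lebesgue_null (I : finType) (S : {ffun I -> R} -> Prop) : Prop :=
  forall eps : R, 0 < eps ->
    exists (a b : nat -> I -> R),
      (forall k i, a k i <= b k i) /\
      (forall x, S x -> exists k, forall i, a k i <= x i <= b k i) /\
      (forall N, \sum_(k < N) box_vol (a k) (b k) < eps).

Definition pos_lebesgue (I : finType) (S : {ffun I -> R} -> Prop) : Prop :=
  ~ lebesgue_null S.

Definition typical_rank (n d R0 : nat) : Prop :=
  pos_lebesgue (fun T : tensor n d => has_cp_rank T R0).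

Definition is_typ_max_rank (n d Rm : nat) : Prop :=
  typical_rank n d Rm /\ forall R0, typical_rank n d R0 -> (R0 <= Rm)%N.

Definition tanhR (x : R) : R := (expR x - expR (- x)) / (expR x + expR (- x)).

End Defs.

From mathcomp Require Import all_boot all_order all_algebra.
From mathcomp Require Import boolp reals sequences exp.
From mathcomp Require Import ring lra.
Set Implicit Arguments. Unset Strict Implicit. Unset Printing Implicit Defensive.
Import Order.TTheory GRing.Theory Num.Theory.
Local Open Scope ring_scope.

(* The slice [B diag(A^T h0) C^T] with [h0 = e_0] is the first frontal slice
   [T(0, ., .)] of [T = [[A, B, C]]], so it suffices to find a tensor of CP rank
   exactly [r] whose first slice has the identity as its leading n x n block;
   its tanh then has [tanh 1] times the identity there, [tanh 0] being [0].
   Since [R_typ-max] is typical, tensors of that rank form a non-null set,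
   whereas tensors with a singular leading block form a null set (a finite
   union of Lipschitz images of cubes of one dimension less); hence some
   tensor of rank [R_typ-max] has an invertible block, which a mode-3 change
   of basis turns into the identity.  Walking entry by entry from a rank-n
   tensor with the same block to this one changes the rank by at most one
   per step and never touches the block, so rank [r] is attained on the way. *)

Lemma widen_ord_inj m p (le_mp : (m <= p)%N) : injective (widen_ord le_mp).
Proof. by move=> i j /(congr1 val) /= /val_inj. Qed.

Lemma rank_widen_scalar (F : fieldType) m p (le_mp : (m <= p)%N)
    (N : 'M[F]_(p, m)) (a : F) :
  a != 0 -> (forall j k, N (widen_ord le_mp j) k = a * (j == k)%:R) ->
  \rank N = m.
Proof.
move=> a_neq0 NE; apply/eqP; rewrite eqn_leq rank_leq_col /=.
have block : rowsub (widen_ord le_mp) N = a *: 1%:M.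
  by apply/matrixP => j k; rewrite !mxE NE.
have := mxrankS (rowsub_sub (widen_ord le_mp) N).
by rewrite block (eqmx_scale _ a_neq0) mxrank1.
Qed.

Lemma dist_mul_le (R : realDomainType) (K dl a1 a2 b1 b2 : R) :
  `|a1| <= K -> `|b2| <= K -> `|a1 - b1| <= dl -> `|a2 - b2| <= dl ->
  `|a1 * a2 - b1 * b2| <= 2 * K * dl.
Proof.
move=> a1K b2K d1 d2.
have -> : a1 * a2 - b1 * b2 = a1 * (a2 - b2) + (a1 - b1) * b2 by ring.
apply: (le_trans (ler_normD _ _)); rewrite !normrM.
have K_ge0 : 0 <= K := le_trans (normr_ge0 _) a1K.
have := ler_pM (normr_ge0 _) (normr_ge0 _) a1K d2.
have := ler_pM (normr_ge0 _) (normr_ge0 _) d1 b2K.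
lra.
Qed.

Lemma tanhR_eq0 (R : realType) (x : R) : (tanhR x == 0) = (x == 0).
Proof.
rewrite /tanhR mulf_eq0 invr_eq0 [expR x + expR (- x) == 0]gt_eqF ?addr_gt0 ?expR_gt0 //.
by rewrite orbF subr_eq0 (inj_eq (@expR_inj R)) eq_sym eqNr.
Qed.

Section Decompositions.
Variable R : realType.
Variables n d : nat.
Local Notation tensor := (tensor R n d).

Lemma cp_tensor_row_mx s1 s2 (A1 : 'M[R]_(n, s1)) (B1 : 'M[R]_(d, s1))
    (C1 : 'M[R]_(n, s1)) (A2 : 'M[R]_(n, s2)) (B2 : 'M[R]_(d, s2))
    (C2 : 'M[R]_(n, s2)) :
  cp_tensor (row_mx A1 A2) (row_mx B1 B2) (row_mx C1 C2) =
  cp_tensor A1 B1 C1 + cp_tensor A2 B2 C2.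
Proof.
apply/ffunP => x; rewrite !ffunE big_split_ord /=.
by congr (_ + _); apply: eq_bigr => s _; rewrite ?row_mxEl ?row_mxEr.
Qed.

Lemma cp_decomposableD (X Y : tensor) s1 s2 :
  cp_decomposable X s1 -> cp_decomposable Y s2 ->
  cp_decomposable (X + Y) (s1 + s2).
Proof.
move=> [A1 [B1 [C1 ->]]] [A2 [B2 [C2 ->]]].
by exists (row_mx A1 A2), (row_mx B1 B2), (row_mx C1 C2); rewrite cp_tensor_row_mx.
Qed.

Lemma cp_decomposable0 s : cp_decomposable (0 : tensor) s.
Proof.
exists 0, 0, 0; apply/ffunP => x; rewrite !ffunE.
by rewrite big1 // => s' _; rewrite !mxE !mul0r.
Qed.

Lemma cp_decomposable_leq (X : tensor) s s' :
  cp_decomposable X s -> (s <= s')%N -> cp_decomposable X s'.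
Proof.
move=> decX le_ss'; rewrite -(subnKC le_ss') -[X]addr0.
exact: cp_decomposableD decX (cp_decomposable0 _).
Qed.

Lemma cp_decomposable_sum m (F : 'I_m -> tensor) :
  (forall j, cp_decomposable (F j) 1) -> cp_decomposable (\sum_(j < m) F j) m.
Proof.
elim: m F => [|m IH] F decF; first by rewrite big_ord0; apply: cp_decomposable0.
by rewrite big_ord_recl; apply: cp_decomposableD (decF _) (IH _ _).
Qed.

Definition delta_tensor (x : tidx n d) (v : R) : tensor :=
  [ffun y => if y == x then v else 0].

Lemma cp_decomposable_delta x v : cp_decomposable (delta_tensor x v) 1.
Proof.
case: x => [[i j] k].
exists (\matrix_(i', _) ((i' == i)%:R * v)), (\matrix_(j', _) (j' == j)%:R),
  (\matrix_(k', _) (k' == k)%:R).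
apply/ffunP => -[[i' j'] k']; rewrite !ffunE big_ord1 !mxE /= !xpair_eqE.
by case: (i' == i); case: (j' == j); case: (k' == k);
  rewrite /= ?(mul1r, mul0r, mulr0, mulr1).
Qed.

(* Entries of E are replaced by those of T one at a time: each step adds one
   rank-one term, so the CP rank cannot jump over r. *)
Lemma cp_rank_between (E T : tensor) r :
  cp_decomposable E r -> (forall s, (s < r)%N -> ~ cp_decomposable T s) ->
  exists X, has_cp_rank X r /\ forall x, E x = T x -> X x = E x.
Proof.
move=> + lowT.
have : forall x, x \notin enum (tidx n d) -> E x = T x by move=> x; rewrite mem_enum.
elim: (enum _) E => [|x xs IH] E agree decE.
  have eq_ET : E = T by apply/ffunP => y; apply: agree.
  by exists E; split; first split; rewrite // eq_ET.
have [[s lt_sr decEs]|full] :=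
  pselect (exists2 s, (s < r)%N & cp_decomposable E s); last first.
  exists E; split=> [|//]; split=> // s lt_sr decEs.
  by apply: full; exists s.
pose E' := E + delta_tensor x (T x - E x).
have E'E y : E y = T y -> E' y = E y.
  move=> eq_y; rewrite !ffunE; case: eqP => [<-|_]; last by rewrite addr0.
  by rewrite eq_y subrr addr0.
have agree' y : y \notin xs -> E' y = T y.
  rewrite !ffunE; case: eqP => [->|ne_yx notin_y]; first by rewrite addrC subrK.
  by rewrite addr0 agree // in_cons negb_or notin_y andbT; apply/eqP.
have decE' : cp_decomposable E' r.
  rewrite -(ltn_predK lt_sr) -addn1; apply: cp_decomposableD (cp_decomposable_delta _ _).
  by apply: cp_decomposable_leq decEs _; rewrite -ltnS (ltn_predK lt_sr).
have [X [rkX XE']] := IH E' agree' decE'.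
by exists X; split=> // y eq_y; rewrite XE' E'E // -eq_y E'E.
Qed.

Definition mode3_mul (S : 'M[R]_n) (X : tensor) : tensor :=
  [ffun x => \sum_(l < n) S x.2 l * X (x.1, l)].

Lemma mode3_mul_cp r (S : 'M[R]_n) (A : 'M[R]_(n, r)) (B : 'M[R]_(d, r))
    (C : 'M[R]_(n, r)) :
  mode3_mul S (cp_tensor A B C) = cp_tensor A B (S *m C).
Proof.
apply/ffunP => x; rewrite !ffunE.
under eq_bigr do rewrite ffunE big_distrr.
rewrite exchange_big /=; apply: eq_bigr => s _; rewrite mxE big_distrr.
by apply: eq_bigr => l _; rewrite /=; ring.
Qed.

Lemma has_cp_rank_mode3 (S : 'M[R]_n) (X : tensor) r :
  S \in unitmx -> has_cp_rank X r -> has_cp_rank (mode3_mul S X) r.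
Proof.
move=> unitS [[A [B [C defX]]] lowX]; rewrite defX mode3_mul_cp.
split; first by exists A, B, (S *m C).
move=> s lt_sr [A' [B' [C' defSX]]]; apply: (lowX s lt_sr).
exists A', B', (invmx S *m C').
by rewrite -mode3_mul_cp -defSX defX mode3_mul_cp mulmxA mulVmx // mul1mx.
Qed.

End Decompositions.

Section BoxCovers.
Variable R : realType.
Variable I : finType.
Local Notation vec := {ffun I -> R}.
Local Notation box := (vec * vec)%type.

Definition is_box (p : box) := forall i, p.1 i <= p.2 i.
Definition in_box (p : box) (x : vec) := forall i, p.1 i <= x i <= p.2 i.
Definition box_volume (p : box) := box_vol p.1 p.2.
Definition in_cube (K : R) (x : vec) := forall i, `|x i| <= K.

Definition box_coverable (S : vec -> Prop) (eta : R) :=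
  exists s : seq box, [/\ forall p, p \in s -> is_box p,
    forall x, S x -> exists2 p, p \in s & in_box p x
    & \sum_(p <- s) box_volume p < eta].

Lemma box_volume_ge0 p : is_box p -> 0 <= box_volume p.
Proof. by move=> ok; apply: prodr_ge0 => i _; rewrite subr_ge0. Qed.

Lemma box_volume0 (i0 : I) : box_volume (0, 0) = 0.
Proof. by rewrite /box_volume /box_vol (bigD1 i0) //= !ffunE subrr mul0r. Qed.

Lemma box_coverable_sub (S S' : vec -> Prop) eta :
  (forall x, S' x -> S x) -> box_coverable S eta -> box_coverable S' eta.
Proof.
by move=> sub_S [s [s_ok s_cover s_vol]]; exists s; split=> // x /sub_S /s_cover.
Qed.

Lemma box_coverable_bigcup (J : finType) (S : J -> vec -> Prop) eta :
  (0 < #|J|)%N -> (forall c, box_coverable (S c) eta) ->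
  box_coverable (fun x => exists c, S c x) (eta *+ #|J|).
Proof.
move=> /card_gt0P [c0 _] /fin_all_exists [s cover_s].
exists (flatten [seq s c | c <- enum J]); split.
- by move=> p /flatten_mapP [c _]; case: (cover_s c) => s_ok _ _; apply: s_ok.
- move=> x [c Sx]; case: (cover_s c) => _ /(_ x Sx) [p ps px] _.
  by exists p => //; apply/flatten_mapP; exists c; rewrite ?mem_enum.
rewrite big_flatten big_map big_enum /= -sumr_const.
by apply: ltr_sum => [|c _]; [apply/hasP; exists c0 | case: (cover_s c)].
Qed.

Lemma box_sequence (i0 : I) (s : nat -> seq box) :
  (forall K p, p \in s K -> is_box p) ->
  exists e : nat -> box, [/\ forall k, is_box (e k),
    forall K p, p \in s K -> exists k, e k = p
    & forall N, \sum_(k < N) box_volume (e k) <=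
                \sum_(K < N.+1) \sum_(p <- s K) box_volume p].
Proof.
move=> s_ok.
(* Each list is prefixed by the null box, so that the k-th partial
   concatenation has more than k entries. *)
pose prefix k := flatten [seq (0, 0) :: s K | K <- iota 0 k.+1].
have prefix_ok k p : p \in prefix k -> is_box p.
  case/flatten_mapP => K _; rewrite in_cons => /predU1P [-> i|]; last exact: s_ok.
  by rewrite ffunE.
have size_prefix k : (k < size (prefix k))%N.
  rewrite size_flatten /shape -map_comp sumnE big_map.
  apply: (@leq_trans (\sum_(K <- iota 0 k.+1) 1)); last exact: leq_sum.
  by rewrite sum1_size size_iota.
have prefixD a b : (a <= b)%N -> exists t, prefix b = prefix a ++ t.
  move=> le_ab; exists (flatten [seq (0, 0) :: s K | K <- iota a.+1 (b - a)]).
  by rewrite /prefix -flatten_cat -map_cat -{1}(subnKC le_ab) -addSn iotaD.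
have nth_prefix a b q : (q < size (prefix a))%N -> (q < size (prefix b))%N ->
    nth (0, 0) (prefix a) q = nth (0, 0) (prefix b) q.
  wlog le_ab : a b / (a <= b)%N => [sym qa qb|qa _].
    by case: (leqP a b) => [|/ltnW] le; [|symmetry]; apply: sym.
  by have [t ->] := prefixD a b le_ab; rewrite nth_cat qa.
exists (fun k => nth (0, 0) (prefix k) k); split.
- by move=> k; apply/prefix_ok/mem_nth.
- move=> K p ps; have pK : p \in prefix K.
    by apply/flatten_mapP; exists K; rewrite ?mem_iota ?ltnSn // in_cons ps orbT.
  exists (index p (prefix K)).
  by rewrite (nth_prefix _ K) ?index_mem ?nth_index.
move=> N.
have <- : \sum_(p <- prefix N) box_volume p =
          \sum_(K < N.+1) \sum_(p <- s K) box_volume p.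
  rewrite big_flatten big_map -(subn0 N.+1) -/(index_iota 0 N.+1) big_mkord.
  by apply: eq_bigr => K _; rewrite big_cons (box_volume0 i0) Monoid.simpm.
rewrite (big_nth (0, 0)) -(subnKC (ltnW (size_prefix N))) big_mkord big_split_ord /=.
rewrite -[X in X <= _]addr0 lerD //.
- apply: ler_sum => k _.
  by rewrite (nth_prefix _ N) // (ltn_trans _ (size_prefix N)).
- apply: sumr_ge0 => k _; apply/box_volume_ge0/prefix_ok/mem_nth.
  by rewrite -ltn_subRL.
Qed.

Lemma sum_halvings (eps : R) m : \sum_(K < m) eps / 2 ^+ K.+1 = eps - eps / 2 ^+ m.
Proof.
elim: m => [|m IH]; first by rewrite big_ord0 expr0 divr1 subrr.
rewrite big_ord_recr /= IH exprS.
have pow2_neq0 : (2 : R) ^+ m != 0 by rewrite gt_eqF // exprn_gt0.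
by field; rewrite pow2_neq0.
Qed.

Lemma exists_cube (x : vec) : exists K : nat, in_cube K%:R x.
Proof.
have sum_ge0 : 0 <= \sum_i `|x i| by apply: sumr_ge0.
exists (Num.bound (\sum_i `|x i|)) => i; apply/ltW/(le_lt_trans _ (archi_boundP sum_ge0)).
by rewrite (bigD1 i) //= lerDl sumr_ge0.
Qed.

Lemma lebesgue_null_sub (S S' : vec -> Prop) :
  (forall x, S' x -> S x) -> lebesgue_null S -> lebesgue_null S'.
Proof.
move=> sub_S nullS eps /nullS [a [b [ab [cover vol]]]].
by exists a, b; split; [|split=> // x /sub_S /cover].
Qed.

Lemma not_lebesgue_null_card0 (S : vec -> Prop) : #|I| = 0%N -> ~ lebesgue_null S.
Proof.
move=> I0 /(_ 1 ltr01) [a [b [_ [_ /(_ 1%N)]]]].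
by rewrite big_ord1 /box_vol big1 ?ltxx // => i; have := card0_eq I0 i.
Qed.

Lemma lebesgue_null_of_coverable (i0 : I) (S : vec -> Prop) :
  (forall (K : nat) eta, 0 < eta ->
     box_coverable (fun x => S x /\ in_cube K%:R x) eta) ->
  lebesgue_null S.
Proof.
move=> coverS eps eps_gt0.
have eta_gt0 K : 0 < eps / 2 ^+ K.+1 by rewrite divr_gt0 // exprn_gt0.
have [s cover_s] := choice (fun K => coverS K _ (eta_gt0 K)).
have s_ok K p : p \in s K -> is_box p by case: (cover_s K) => s_ok _ _; apply: s_ok.
have [e [e_ok e_cover e_vol]] := box_sequence i0 s_ok.
exists (fun k => (e k).1), (fun k => (e k).2); split; [|split].
- exact: e_ok.
- move=> x Sx; have [K cubeK] := exists_cube x.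
  case: (cover_s K) => _ /(_ x (conj Sx cubeK)) [p ps px] _.
  by have [k ek] := e_cover K p ps; exists k; rewrite ek.
move=> N; apply: le_lt_trans (e_vol N) _.
apply: (@lt_le_trans _ _ (\sum_(K < N.+1) eps / 2 ^+ K.+1)).
  by apply: ltr_sum => [|K _]; [apply/hasP; exists ord0 | case: (cover_s K)].
by rewrite sum_halvings gerBl divr_ge0 ?exprn_ge0 ?ltW.
Qed.

Definition grid_point (K : R) (M k : nat) : R := - K + k%:R * (2 * K / M%:R).

Lemma grid_point_bounded (K : R) (M k : nat) :
  0 <= K -> (0 < M)%N -> (k <= M)%N -> `|grid_point K M k| <= K.
Proof.
move=> K_ge0 M_gt0 le_kM; have M_gt0' : 0 < M%:R :> R by rewrite ltr0n.
have step_ge0 : 0 <= 2 * K / M%:R by rewrite divr_ge0 ?mulr_ge0.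
have step_le : k%:R * (2 * K / M%:R) <= 2 * K.
  rewrite -[leRHS](divfK (lt0r_neq0 M_gt0')) [leRHS]mulrC.
  by rewrite ler_wpM2r // ler_nat.
have : 0 <= k%:R * (2 * K / M%:R) by rewrite mulr_ge0.
by rewrite /grid_point ler_norml; move=> ?; apply/andP; split; lra.
Qed.

Lemma grid_point_near (K x : R) (M : nat) : 0 < K -> (0 < M)%N -> `|x| <= K ->
  exists k : 'I_M.+1, `|x - grid_point K M k| <= 2 * K / M%:R.
Proof.
move=> K_gt0 M_gt0; rewrite ler_norml => /andP [x_geN x_le].
have M_gt0' : 0 < M%:R :> R by rewrite ltr0n.
set dl := 2 * K / M%:R; have dl_gt0 : 0 < dl by rewrite divr_gt0 ?mulr_gt0.
set y := (x + K) / dl.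
have y_ge0 : 0 <= y by apply: divr_ge0; [lra | exact: ltW].
have le_yM : y <= M%:R.
  by rewrite ler_pdivrMr // /dl mulrC divfK ?lt0r_neq0 //; lra.
have /andP [lo_y hi_y] := truncn_itv y_ge0.
have le_tM : (Num.trunc y <= M)%N by rewrite truncn_le_nat (le_lt_trans le_yM) ?ltr_nat.
exists (inord (Num.trunc y)); rewrite /grid_point inordK -/dl //.
have -> : x - (- K + (Num.trunc y)%:R * dl) = (y - (Num.trunc y)%:R) * dl.
  by rewrite /y; field; rewrite lt0r_neq0.
rewrite normrM (gtr0_norm dl_gt0) ger0_norm ?subr_ge0 //; apply: ler_piMl (ltW dl_gt0) _.
by rewrite -natr1 in hi_y; lra.
Qed.

Definition cube_lipschitz_off (i0 : I) (K L : R) (Phi : vec -> vec) :=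
  forall p q dl, 0 <= dl -> in_cube K p -> in_cube K q ->
    (forall i, i != i0 -> `|p i - q i| <= dl) ->
    forall i, `|Phi p i - Phi q i| <= L * dl.

(* (M + 1)^(#|I| - 1) grid points on the coordinates other than i0, each
   contributing a box of side 2 L (2 K / M). *)
Lemma lipschitz_image_grid_cover (i0 : I) (K L : R) (M : nat) (Phi : vec -> vec) :
  0 < K -> 0 <= L -> (0 < M)%N -> cube_lipschitz_off i0 K L Phi ->
  exists s : seq box, [/\ forall p, p \in s -> is_box p,
    forall p, in_cube K p -> exists2 b, b \in s & in_box b (Phi p)
    & \sum_(b <- s) box_volume b = M.+1%:R ^+ #|I|.-1 * (4 * L * K / M%:R) ^+ #|I|].
Proof.
move=> K_gt0 L_ge0 M_gt0 lipPhi; set dl := 2 * K / M%:R.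
have dl_ge0 : 0 <= dl by apply: divr_ge0; [apply: mulr_ge0 (ltW K_gt0) | apply: ler0n].
have Ldl_ge0 : 0 <= L * dl by rewrite mulr_ge0.
pose G := {ffun {i : I | i != i0} -> 'I_M.+1}.
pose q (g : G) : vec := [ffun i => if insub i : option {i : I | i != i0} is Some i'
  then grid_point K M (g i') else 0].
have q_cube g : in_cube K (q g).
  move=> i; rewrite ffunE; case: insubP => [i' _ _|_]; last by rewrite normr0 ltW.
  by apply: grid_point_bounded; rewrite ?ltW // -ltnS.
pose box_at (g : G) : box :=
  ([ffun i => Phi (q g) i - L * dl], [ffun i => Phi (q g) i + L * dl]).
exists [seq box_at g | g <- enum G]; split.
- by move=> b /mapP [g _ ->] i; rewrite !ffunE; lra.
- move=> p p_cube.
  have [f near_f] := fin_all_exists (fun i' : {i : I | i != i0} =>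
    grid_point_near K_gt0 M_gt0 (p_cube (val i'))).
  pose g : G := [ffun i' => f i'].
  exists (box_at g); first by rewrite map_f ?mem_enum.
  have near_g i : i != i0 -> `|p i - q g i| <= dl.
    move=> ne_i; rewrite ffunE insubT /= ffunE.
    by have := near_f (Sub i ne_i); rewrite SubK.
  move=> i; have := lipPhi p (q g) dl dl_ge0 p_cube (q_cube g) near_g i.
  by rewrite !ffunE ler_norml => /andP [lo hi]; apply/andP; split; lra.
rewrite big_map big_enum /=.
have box_at_volume g : box_volume (box_at g) = (4 * L * K / M%:R) ^+ #|I|.
  rewrite /box_volume /box_vol -prodr_const; apply: eq_bigr => i _.
  by rewrite !ffunE /dl; ring.
rewrite (eq_bigr _ (fun g _ => box_at_volume g)) sumr_const.
by rewrite card_ffun card_ord card_sig cardC1 -natrX [(_ ^ _)%:R * _]mulr_natl.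
Qed.

Lemma grid_volume_small (a eta : R) (N : nat) : 0 <= a -> 0 < eta ->
  exists2 M : nat, (0 < M)%N & M.+1%:R ^+ N * (a / M%:R) ^+ N.+1 < eta.
Proof.
move=> a_ge0 eta_gt0; set c := 2 ^+ N * a ^+ N.+1.
have c_ge0 : 0 <= c by rewrite mulr_ge0 ?exprn_ge0.
pose M := (Num.bound (c / eta)).+1; exists M => //.
have M_gt0 : 0 < M%:R :> R by rewrite ltr0n.
have le_2M : M.+1%:R ^+ N * (a / M%:R) ^+ N.+1 <= (2 * M%:R) ^+ N * (a / M%:R) ^+ N.+1.
  apply: ler_wpM2r; first by rewrite exprn_ge0 // divr_ge0.
  apply: lerXn2r; rewrite ?nnegrE ?mulr_ge0 //.
  have : 1 <= M%:R :> R by rewrite ler1n.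
  by rewrite -natr1; lra.
apply: le_lt_trans le_2M _.
have -> : (2 * M%:R) ^+ N * (a / M%:R) ^+ N.+1 = c / M%:R.
  rewrite /c exprMn expr_div_n [M%:R ^+ N.+1]exprS.
  have : M%:R ^+ N != 0 :> R by rewrite expf_neq0 ?lt0r_neq0.
  move: (M%:R ^+ N) (a ^+ N.+1) (2 ^+ N) => x y z x_neq0.
  by field; rewrite x_neq0 lt0r_neq0.
rewrite ltr_pdivrMr // mulrC -ltr_pdivrMr //.
by apply: (lt_le_trans (archi_boundP (divr_ge0 c_ge0 (ltW eta_gt0)))); rewrite ler_nat.
Qed.

Lemma lipschitz_image_coverable (i0 : I) (K L : R) (Phi : vec -> vec) :
  0 < K -> 0 <= L -> cube_lipschitz_off i0 K L Phi ->
  forall eta, 0 < eta -> box_coverable (fun y => exists2 p, in_cube K p & Phi p = y) eta.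
Proof.
move=> K_gt0 L_ge0 lipPhi eta eta_gt0.
have cardI : #|I| = #|I|.-1.+1 by rewrite prednK //; apply/card_gt0P; exists i0.
have a_ge0 : 0 <= 4 * L * K by rewrite !mulr_ge0 // ltW.
have [M M_gt0] := grid_volume_small #|I|.-1 a_ge0 eta_gt0; rewrite -cardI => small.
have [s [s_ok s_cover s_vol]] := lipschitz_image_grid_cover K_gt0 L_ge0 M_gt0 lipPhi.
by exists s; split=> // [y [p p_cube <-]|]; [apply: s_cover | rewrite s_vol].
Qed.

End BoxCovers.

Section SingularBlocks.
Variable R : realType.
Variables n' d : nat.
Local Notation n := n'.+1.
Hypothesis le_nd : (n <= d)%N.
Local Notation vec := {ffun tidx n d -> R}.
Local Notation row := (widen_ord le_nd).

Definition top_block (x : vec) : 'M[R]_n := \matrix_(j, k) x (ord0, row j, k).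

Definition in_row (c : 'I_n) (y : tidx n d) := (y.1.1 == ord0) && (y.1.2 == row c).

(* A singular block has a row which is a combination of the other rows with
   coefficients in [-1, 1]; [singularize c] builds such tensors, storing the
   coefficients in row c itself, whose entry (0, c, c) is left unused. *)
Definition singularize (c : 'I_n) (p : vec) : vec :=
  [ffun y => if in_row c y
     then - \sum_(j | j != c) p (ord0, row c, j) * p (ord0, row j, y.2)
     else p y].

Lemma singularize_lipschitz (c : 'I_n) (K : R) :
  cube_lipschitz_off (ord0, row c, c) K (n%:R * (2 * K) + 1) (singularize c).
Proof.
move=> p q dl dl_ge0 p_cube q_cube near_pq y.
have K_ge0 : 0 <= K := le_trans (normr_ge0 _) (p_cube y).
have off_c (j k : 'I_n) : (j != c) || (k != c) ->
    `|p (ord0, row j, k) - q (ord0, row j, k)| <= dl.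
  move=> ne_jk; apply: near_pq.
  by rewrite !xpair_eqE eqxx (inj_eq (widen_ord_inj (le_mp:=le_nd))) negb_and.
rewrite !ffunE; case: ifP => [_|not_row]; last first.
  apply: le_trans (near_pq _ _) _.
    by apply: contraFneq not_row => ->; rewrite /in_row !eqxx.
  by rewrite -[leLHS]mul1r ler_wpM2r // lerDr mulr_ge0 // mulr_ge0.
rewrite opprK addrC -sumrB; apply: le_trans (ler_norm_sum _ _ _) _.
apply: (@le_trans _ _ (\sum_(j < n | j != c) 2 * K * dl)).
  apply: ler_sum => j ne_jc; rewrite distrC; apply: dist_mul_le.
  - exact: p_cube.
  - exact: q_cube.
  - by apply: off_c; rewrite ne_jc orbT.
  - by apply: off_c; rewrite ne_jc.
apply: (@le_trans _ _ (\sum_(j < n) 2 * K * dl)).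
  by rewrite [leRHS](bigD1 c) //= lerDr !mulr_ge0.
have -> : (n%:R * (2 * K) + 1) * dl = n%:R * (2 * K * dl) + dl by ring.
by rewrite sumr_const card_ord -[_ *+ n]mulr_natl lerDl.
Qed.

Lemma singular_in_image (K : R) (x : vec) :
  1 <= K -> in_cube K x -> \det (top_block x) = 0 ->
  exists c, exists2 p, in_cube K p & singularize c p = x.
Proof.
move=> K_ge1 x_cube /eqP /det0P [v v_neq0 vx0].
have [c _ v_max] := @arg_maxP _ R _ ord0 xpredT (fun j => `|v ord0 j|) isT.
have vc_neq0 : v ord0 c != 0.
  apply: contraNneq v_neq0 => vc0; apply/eqP/rowP => j; rewrite mxE.
  by have := v_max j isT; rewrite vc0 normr0 /= normr_le0 => /eqP.
pose w j := v ord0 j / v ord0 c.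
have w_le1 j : `|w j| <= 1.
  by rewrite normrM normrV ?unitfE // ler_pdivrMr ?normr_gt0 // mul1r; apply: v_max.
have kernel k : \sum_j w j * x (ord0, row j, k) = 0.
  have := congr1 (fun u : 'rV_n => u ord0 k / v ord0 c) vx0.
  rewrite !mxE mul0r mulr_suml => sum0; rewrite -[RHS]sum0.
  by apply: eq_bigr => j _; rewrite /top_block mxE /w mulrAC.
exists c, [ffun y => if in_row c y then w y.2 else x y].
  move=> y; rewrite ffunE; case: ifP => _; last exact: x_cube.
  exact: le_trans (w_le1 _) K_ge1.
apply/ffunP => y; rewrite !ffunE; case: ifP => row_y; last by rewrite row_y.
have in_rowE j k : in_row c (ord0, row j, k) = (j == c).
  by rewrite /in_row /= (inj_eq (widen_ord_inj (le_mp:=le_nd))).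
under eq_bigr => j ne_jc do rewrite !ffunE !in_rowE eqxx (negbTE ne_jc).
move/andP: row_y (kernel y.2) => [/eqP y1 /eqP y2].
rewrite (bigD1 c) //= /w divff // mul1r => /eqP; rewrite addr_eq0 => /eqP <-.
by rewrite -y1 -y2 -!surjective_pairing.
Qed.

Lemma top_block_singular_null : lebesgue_null (fun x : vec => \det (top_block x) = 0).
Proof.
apply: (lebesgue_null_of_coverable (ord0, row ord0, ord0)) => K eta eta_gt0.
have K1_ge1 : 1 <= K.+1%:R :> R by rewrite ler1n.
have K1_gt0 : 0 < K.+1%:R :> R by rewrite ltr0n.
apply: (@box_coverable_sub _ _
  (fun x => exists c, exists2 p, in_cube K.+1%:R p & singularize c p = x)).
  move=> x [det0 x_cube]; apply: singular_in_image det0 => //.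
  by move=> i; apply: le_trans (x_cube i) _; rewrite ler_nat.
have -> : eta = (eta / n%:R) *+ #|'I_n|.
  by rewrite card_ord -[_ *+ n]mulr_natr divfK ?pnatr_eq0.
apply: box_coverable_bigcup; first by rewrite card_ord.
move=> c; apply: (lipschitz_image_coverable K1_gt0 _ (@singularize_lipschitz c _)).
  by rewrite addr_ge0 ?mulr_ge0 ?ltW.
by rewrite divr_gt0 ?ltr0n.
Qed.

End SingularBlocks.

Lemma cp_tensor_slice (R : realType) n d r (A : 'M[R]_(n, r)) (B : 'M[R]_(d, r))
    (C : 'M[R]_(n, r)) (h : 'cV[R]_n) j k :
  (B *m diag_mx (A^T *m h)^T *m C^T) j k = \sum_i h i 0 * cp_tensor A B C (i, j, k).
Proof.
rewrite mul_mx_diag !mxE; under eq_bigr do rewrite !mxE big_distrr big_distrl /=.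
rewrite exchange_big; apply: eq_bigr => i _; rewrite ffunE big_distrr.
by apply: eq_bigr => s _; rewrite !mxE /=; ring.
Qed.

Section TypicalTensors.
Variable R : realType.

(* In dimension 0 every box has volume 1, so no set is null and every rank is
   typical. *)
Lemma typ_max_rank_gt0 n d Rm : is_typ_max_rank R n d Rm -> (0 < n)%N.
Proof.
case: n => // -[_ /(_ Rm.+1)]; rewrite ltnn; apply.
by apply: not_lebesgue_null_card0; rewrite !card_prod card_ord.
Qed.

Variables n' d : nat.
Local Notation n := n'.+1.
Hypothesis le_nd : (n <= d)%N.
Local Notation tensor := (tensor R n d).
Local Notation row := (widen_ord le_nd).

Lemma top_block_mode3 (S : 'M[R]_n) (X : tensor) :
  top_block le_nd (mode3_mul S X) = top_block le_nd X *m S^T.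
Proof.
by apply/matrixP => j k; rewrite !mxE ffunE; apply: eq_bigr => l _; rewrite !mxE mulrC.
Qed.

Lemma identity_block_decomposable :
  exists2 E : tensor, cp_decomposable E n & top_block le_nd E = 1%:M.
Proof.
exists (\sum_(j < n) delta_tensor (ord0, row j, j) 1).
  by apply: cp_decomposable_sum => j; apply: cp_decomposable_delta.
apply/matrixP => j k; rewrite !mxE sum_ffunE (bigD1 k) //= big1 => [|i ne_ik].
  rewrite ffunE !xpair_eqE (inj_eq (widen_ord_inj (le_mp:=le_nd))) !eqxx /=.
  by rewrite andbT addr0; case: (j == k).
by rewrite /delta_tensor ffunE !xpair_eqE [k == i]eq_sym (negbTE ne_ik) andbF.
Qed.

Lemma exists_typical_invertible_block Rm : typical_rank R n d Rm ->
  exists T : tensor, has_cp_rank T Rm /\ top_block le_nd T \in unitmx.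
Proof.
move=> typ; apply: contrapT => none; apply: typ.
apply: lebesgue_null_sub (top_block_singular_null le_nd) => T rkT.
apply/eqP; apply: contrapT => det_neq0; apply: none.
by exists T; split=> //; rewrite unitmxE unitfE; apply/negP.
Qed.

Lemma exists_typical_identity_block Rm : typical_rank R n d Rm ->
  exists T : tensor, has_cp_rank T Rm /\ top_block le_nd T = 1%:M.
Proof.
move=> /exists_typical_invertible_block [T [rkT unitP]].
have unitS : (invmx (top_block le_nd T))^T \in unitmx by rewrite unitmx_tr unitmx_inv.
exists (mode3_mul (invmx (top_block le_nd T))^T T); split.
  exact: has_cp_rank_mode3.
by rewrite top_block_mode3 trmxK mulmxV.
Qed.

Lemma exists_rank_identity_block r Rm : typical_rank R n d Rm -> (n <= r <= Rm)%N ->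
  exists X : tensor, has_cp_rank X r /\ top_block le_nd X = 1%:M.
Proof.
move=> typ /andP [le_nr le_rRm].
have [T [[_ lowT] blockT]] := exists_typical_identity_block typ.
have [E decE blockE] := identity_block_decomposable.
have [X [rkX XE]] := cp_rank_between (cp_decomposable_leq decE le_nr)
  (fun s lt_sr => lowT s (leq_trans lt_sr le_rRm)).
exists X; split=> //; rewrite -blockE; apply/matrixP => j k; rewrite !mxE XE //.
by have := congr1 (fun M : 'M[R]_n => M j k) (etrans blockE (esym blockT)); rewrite !mxE.
Qed.

End TypicalTensors.

Theorem lemma2 (R : realType) (n d r Rm : nat) :
  is_typ_max_rank R n d Rm ->
  (n <= d)%N -> (d <= r)%N -> (r <= Rm)%N ->
  exists (A : 'M[R]_(n, r)) (B : 'M[R]_(d, r)) (C : 'M[R]_(n, r)) (h0 : 'cV[R]_n),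
    has_cp_rank (cp_tensor A B C) r /\
    \rank (B *m diag_mx (A^T *m h0)^T *m C^T) = n /\
    \rank (map_mx (@tanhR R) (B *m diag_mx (A^T *m h0)^T *m C^T)) = n.
Proof.
move=> typ_max le_nd le_dr le_rRm.
case: n typ_max le_nd (typ_max_rank_gt0 typ_max) => // n' [typ _] le_nd _.
have le_nrRm : (n'.+1 <= r <= Rm)%N by rewrite (leq_trans le_nd le_dr).
have [X [rkX blockX]] := exists_rank_identity_block le_nd typ le_nrRm.
have [[A [B [C defX]]] _] := rkX.
pose h0 : 'cV[R]_n'.+1 := \col_i (i == ord0)%:R.
exists A, B, C, h0; split; first by rewrite -defX.
set M := B *m _ *m _.
have XE j k : X (ord0, widen_ord le_nd j, k) = (j == k)%:R.
  by have := congr1 (fun N : 'M[R]_n'.+1 => N j k) blockX; rewrite !mxE.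
have ME j k : M (widen_ord le_nd j) k = (j == k)%:R.
  rewrite -XE /M cp_tensor_slice -defX (bigD1 ord0) //= big1 => [|i ne_i0].
    by rewrite !mxE eqxx mul1r addr0.
  by rewrite !mxE (negbTE ne_i0) mul0r.
have tanh1_neq0 : @tanhR R 1 != 0 by rewrite tanhR_eq0 oner_eq0.
split.
  by apply: (@rank_widen_scalar _ _ _ le_nd _ 1) => [|j k]; rewrite ?oner_eq0 ?ME ?mul1r.
apply: (@rank_widen_scalar _ _ _ le_nd _ _ tanh1_neq0) => j k; rewrite mxE ME.
by case: (j == k); rewrite ?mulr1 ?mulr0 //; apply/eqP; rewrite tanhR_eq0.
Qed.
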